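(* Let $\eta\in\Upsilon_{z_0}$ with $\mathsf w(\eta)=\cdots s_{i_1}s_{i_0}$ of period $N$. Then $-\eta\in\Upsilon_{z_0}$, and $\mathsf w(-\eta)=\cdots\mathsf y\mathsf y\mathsf y$ (the infinite leftward repetition of $\mathsf y$), where $\mathsf y=s_{i_0}s_{i_1}\cdots s_{i_{N-1}}$.
   Context: Let $\widetilde W$ be an affine Weyl group with simple reflections $s_i$ ($i\in\widetilde I$), acting on the right on $V^*$, with coroot lattice $Q^\vee$, affine hyperplane arrangement $\mathcal H_{\widetilde W}$, fundamental alcove $\mathcal A$, and alcoves $\mathcal A u$ ($u\in\widetilde W$) in bijection with $\widetilde W$. Fix $z_0$ in the interior of $\mathcal A$. $\Upsilon_{z_0}$ is the set of $\eta\in Q^\vee\setminus\{0\}$ such that the ray from $z_0$ in direction $\eta$ passes through no intersection of two or more hyperplanes of $\mathcal H_{\widetilde W}$. For such $\eta$, if the ray passes successively through alcoves $\mathcal A u_0=\mathcal A,\mathcal A u_1,\dots$, let $s_{i_j}$ be the simple reflection with $u_{j+1}=s_{i_j}u_j$ and define the infinite word (extending to the left) $\mathsf w(\eta)=\cdots s_{i_2}s_{i_1}s_{i_0}$; it is periodic, with period $N=N_\eta$. *)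

From HB Require Import structures.
From mathcomp Require Import all_boot all_order all_algebra.
From mathcomp Require Import classical_sets reals.
Set Implicit Arguments. Unset Strict Implicit. Unset Printing Implicit Defensive.
Import Order.TTheory GRing.Theory Num.Theory.
Local Open Scope ring_scope.
Local Open Scope classical_set_scope.

Section AffineWeyl.
Variables (R : realType) (n : nat).

(* V^* is identified with R^n (row vectors) via the standard inner product. *)
Definition dot (x y : 'rV[R]_n) : R := (x *m y^T) 0 0.

Definition coroot (a : 'rV[R]_n) : 'rV[R]_n := (2 / dot a a) *: a.

(* reflection of V^* across the affine hyperplane {x | <x,a> = k} *)
Definition refl (a : 'rV[R]_n) (k : R) (x : 'rV[R]_n) : 'rV[R]_n :=
  x - (dot x (coroot a) - k * 2 / dot a a) *: a.

Definition root_system (Phi : seq 'rV[R]_n) : Prop :=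
  [/\ 0 \notin Phi,
      (forall a b, a \in Phi -> b \in Phi -> b - dot b (coroot a) *: a \in Phi),
      (forall a b, a \in Phi -> b \in Phi -> exists k : int, dot b (coroot a) = k%:~R),
      (forall a (c : R), a \in Phi -> c *: a \in Phi -> c = 1 \/ c = -1)
    & (forall x, (forall a, a \in Phi -> dot x a = 0) -> x = 0)].

Definition irreducible_rs (Phi : seq 'rV[R]_n) : Prop :=
  forall P : pred 'rV[R]_n,
    (exists2 a, a \in Phi & P a) -> (exists2 b, b \in Phi & ~~ P b) ->
    exists a b, [/\ a \in Phi, b \in Phi, P a, ~~ P b & dot a b != 0].

Definition nonneg_comb (Delta : 'I_n -> 'rV[R]_n) (a : 'rV[R]_n) : Prop :=
  exists c : 'I_n -> nat, a = \sum_(i < n) (c i)%:R *: Delta i.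

Definition simple_system (Phi : seq 'rV[R]_n) (Delta : 'I_n -> 'rV[R]_n) : Prop :=
  (forall i, Delta i \in Phi) /\
  (forall a, a \in Phi -> nonneg_comb Delta a \/ nonneg_comb Delta (- a)).

Definition pos_root (Phi : seq 'rV[R]_n) (Delta : 'I_n -> 'rV[R]_n) a : Prop :=
  a \in Phi /\ nonneg_comb Delta a.

Definition highest_root (Phi : seq 'rV[R]_n) (Delta : 'I_n -> 'rV[R]_n) theta : Prop :=
  theta \in Phi /\ forall b, b \in Phi -> nonneg_comb Delta (theta - b).

Definition coroot_lattice (Phi : seq 'rV[R]_n) (eta : 'rV[R]_n) : Prop :=
  exists c : nat -> int, eta = \sum_(j < size Phi) (c j)%:~R *: coroot (Phi`_j).

Definition hyperplane (Phi : seq 'rV[R]_n) (H : set 'rV[R]_n) : Prop :=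
  exists a (k : int), a \in Phi /\ H = [set x | dot x a = k%:~R].

Definition fund_alcove (Phi : seq 'rV[R]_n) (Delta : 'I_n -> 'rV[R]_n) : set 'rV[R]_n :=
  [set x | forall a, pos_root Phi Delta a -> 0 < dot x a < 1].

(* simple reflections s_i, i in I~ = 'I_n.+1; index 0 is the affine node
   (reflection across {<x,theta> = 1}), index i.+1 is the reflection for Delta i *)
Definition sref (Delta : 'I_n -> 'rV[R]_n) (theta : 'rV[R]_n) (i : 'I_n.+1) :
  'rV[R]_n -> 'rV[R]_n :=
  match unlift ord0 i with
  | None => refl theta 1
  | Some k => refl (Delta k) 0
  end.

(* Right action: x.(s u) = (x.s).u.  Given the index sequence w = (i_0, i_1, ...),
   uact w j is the map x |-> x.u_j where u_0 = 1 and u_{j+1} = s_{i_j} u_j. *)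
Fixpoint uact (Delta : 'I_n -> 'rV[R]_n) theta (w : nat -> 'I_n.+1) (j : nat) :
  'rV[R]_n -> 'rV[R]_n :=
  match j with
  | 0 => id
  | j'.+1 => uact Delta theta w j' \o sref Delta theta (w j')
  end.

(* the alcove A u, where f is the map x |-> x.u *)
Definition alcove (Phi : seq 'rV[R]_n) Delta (f : 'rV[R]_n -> 'rV[R]_n) : set 'rV[R]_n :=
  f @` fund_alcove Phi Delta.

Definition Upsilon (Phi : seq 'rV[R]_n) (z0 eta : 'rV[R]_n) : Prop :=
  [/\ coroot_lattice Phi eta, eta != 0 &
      forall t : R, 0 <= t -> ~ exists H1 H2,
        [/\ hyperplane Phi H1, hyperplane Phi H2, H1 <> H2,
            H1 (z0 + t *: eta) & H2 (z0 + t *: eta)]].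

(* ray_word: the ray from z0 in direction eta passes successively through the
   alcoves A u_0 = A, A u_1, ... with u_{j+1} = s_{w j} u_j; i.e.
   w(eta) = ... s_{w 2} s_{w 1} s_{w 0}. *)
Definition ray_word (Phi : seq 'rV[R]_n) Delta theta (z0 eta : 'rV[R]_n)
  (w : nat -> 'I_n.+1) : Prop :=
  exists t : nat -> R,
    [/\ t 0%N = 0, (forall j, t j < t j.+1), (forall M : R, exists j, M < t j) &
        forall (j : nat) (s : R), t j < s -> s < t j.+1 ->
          alcove Phi Delta (uact Delta theta w j) (z0 + s *: eta)].

End AffineWeyl.

From HB Require Import structures.
From mathcomp Require Import all_boot all_order all_algebra all_fingroup.
From mathcomp Require Import classical_sets reals.
From mathcomp Require Import ring lra zify.
Set Implicit Arguments. Unset Strict Implicit. Unset Printing Implicit Defensive.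
Import Order.TTheory GRing.Theory Num.Theory.
Local Open Scope ring_scope.
Local Open Scope classical_set_scope.

(* The linear part of the right action of u_N permutes the finite set of roots,
   so some power of it is the identity: with K := d N, u_K is a translation by
   a vector b, and the word is K-periodic.  Since the alcoves A u_{kK} = A + k b
   all meet the ray, b = c eta with c > 0.  Reflections being involutions,
   x.u_{K-j} = x.u'_j + b for the reversed word u', so the alcoves met by the
   ray in direction -eta are the translates by -(q+1) b of those met by the
   original ray, in reverse order: the j-th crossing time of the reversed ray,
   for j - 1 = q K + r with r < K, is (q+1) c - t_{K-r}. *)

Section Dot.
Variables (R : realType) (n : nat).
Implicit Types x y z a : 'rV[R]_n.

Lemma dotE x y : dot x y = \sum_j x 0 j * y 0 j.
Proof. by rewrite /dot mxE; apply: eq_bigr => j _; rewrite mxE. Qed.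

Lemma dotC x y : dot x y = dot y x.
Proof. by rewrite !dotE; apply: eq_bigr => j _; rewrite mulrC. Qed.

Lemma dotDl x y z : dot (x + y) z = dot x z + dot y z.
Proof. by rewrite !dotE -big_split; apply: eq_bigr => j _; rewrite mxE mulrDl. Qed.

Lemma dotZl k x z : dot (k *: x) z = k * dot x z.
Proof. by rewrite !dotE mulr_sumr; apply: eq_bigr => j _; rewrite mxE mulrA. Qed.

Lemma dotNl x z : dot (- x) z = - dot x z.
Proof. by rewrite -scaleN1r dotZl mulN1r. Qed.

Lemma dotBl x y z : dot (x - y) z = dot x z - dot y z.
Proof. by rewrite dotDl dotNl. Qed.

Lemma dot0l z : dot 0 z = 0.
Proof. by rewrite -(scale0r 0) dotZl mul0r. Qed.

Lemma dotZr k x z : dot z (k *: x) = k * dot z x.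
Proof. by rewrite !(dotC z) dotZl. Qed.

Lemma dotBr x y z : dot z (x - y) = dot z x - dot z y.
Proof. by rewrite !(dotC z) dotBl. Qed.

Lemma dotNr x z : dot z (- x) = - dot z x.
Proof. by rewrite !(dotC z) dotNl. Qed.

Lemma dotxx_eq0 x : (dot x x == 0) = (x == 0).
Proof.
apply/idP/eqP => [|->]; last by rewrite dot0l.
rewrite dotE psumr_eq0 => [/allP x0|j _]; last by rewrite -expr2 sqr_ge0.
apply/rowP => j; rewrite mxE; apply/eqP.
by rewrite -sqrf_eq0 expr2; exact: x0 j (mem_index_enum j).
Qed.

Lemma dot_coroot x a : dot x (coroot a) = 2 * dot x a / dot a a.
Proof. by rewrite /coroot dotZr mulrC mulrA [dot x a * 2]mulrC. Qed.

Lemma rV_neq0_dim_gt0 x : x != 0 -> (0 < n)%N.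
Proof. by case: n x => [|//] x; rewrite thinmx0 eqxx. Qed.

End Dot.

Section AffineMaps.
Variables (R : realType) (n : nat).
Implicit Types (f g : 'rV[R]_n -> 'rV[R]_n) (Phi : seq 'rV[R]_n).

Definition lin_part f (x : 'rV[R]_n) := f x - f 0.

Definition affine f := forall u v, f u - f v = lin_part f (u - v).

Definition lin_isometric f :=
  forall u v, dot (lin_part f u) (lin_part f v) = dot u v.

Definition root_preserving Phi f := forall a, a \in Phi -> lin_part f a \in Phi.

Lemma affine_id : affine (@id 'rV[R]_n).
Proof. by move=> u v; rewrite /lin_part subr0. Qed.

Lemma lin_isometric_id : lin_isometric (@id 'rV[R]_n).
Proof. by move=> u v; rewrite /lin_part !subr0. Qed.

Lemma root_preserving_id Phi : root_preserving Phi (@id 'rV[R]_n).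
Proof. by move=> a; rewrite /lin_part subr0. Qed.

Lemma lin_part_comp f g x : affine f -> lin_part (f \o g) x = lin_part f (lin_part g x).
Proof. by move=> Af; rewrite /lin_part [in LHS]/comp Af. Qed.

Lemma affine_comp f g : affine f -> affine g -> affine (f \o g).
Proof. by move=> Af Ag u v; rewrite lin_part_comp // [in LHS]/comp Af Ag. Qed.

Lemma lin_isometric_comp f g :
  affine f -> lin_isometric f -> lin_isometric g -> lin_isometric (f \o g).
Proof. by move=> Af If Ig u v; rewrite (lin_part_comp _ u Af) (lin_part_comp _ v Af) If Ig. Qed.

Lemma root_preserving_comp Phi f g : affine f ->
  root_preserving Phi f -> root_preserving Phi g -> root_preserving Phi (f \o g).
Proof. by move=> Af Pf Pg a Pa; rewrite (lin_part_comp _ a Af); apply/Pf/Pg. Qed.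

Lemma lin_partB f u v : affine f -> lin_part f (u - v) = lin_part f u - lin_part f v.
Proof. by move=> Af; rewrite -Af /lin_part opprB addrA subrK. Qed.

End AffineMaps.

Section Reflection.
Variables (R : realType) (n : nat) (a : 'rV[R]_n) (k : R).
Hypothesis a_neq0 : a != 0.
Implicit Types x y v z : 'rV[R]_n.

Let aa_neq0 : dot a a != 0. Proof. by rewrite dotxx_eq0. Qed.

Lemma lin_part_refl v : lin_part (refl a k) v = v - dot v (coroot a) *: a.
Proof. by apply/rowP => j; rewrite /lin_part /refl dot0l !mxE; ring. Qed.

Lemma refl_affine : affine (refl a k).
Proof.
by move=> x y; rewrite lin_part_refl /refl dotBl; apply/rowP => j; rewrite !mxE; ring.
Qed.

Lemma refl_lin_isometric : lin_isometric (refl a k).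
Proof.
move=> u v; rewrite !lin_part_refl !dotBl !dotBr !dotZl !dotZr ?dot_coroot (dotC a v).
by field.
Qed.

Lemma refl_dot x : dot (refl a k x) a = 2 * k - dot x a.
Proof. by rewrite /refl dotBl dotZl dot_coroot; field. Qed.

Lemma reflK : involutive (refl a k).
Proof.
move=> x; rewrite /refl !dotBl !dotZl !dot_coroot.
by apply/rowP => j; rewrite !mxE; field.
Qed.

Lemma refl_ray z s v : refl a k (z + s *: v) = refl a k z + s *: lin_part (refl a k) v.
Proof.
by rewrite lin_part_refl /refl dotDl dotZl; apply/rowP => j; rewrite !mxE; ring.
Qed.

End Reflection.

Section RootSystem.
Variables (R : realType) (n : nat) (Phi : seq 'rV[R]_n).
Hypothesis HPhi : root_system Phi.

Lemma root_neq0 a : a \in Phi -> a != 0.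
Proof. by case: HPhi => Phi0 _ _ _ _ Pa; apply: contraNneq Phi0 => a0; rewrite -a0. Qed.

Lemma root_opp a : a \in Phi -> - a \in Phi.
Proof.
move=> Pa; case: HPhi => _ refl_closed _ _ _.
have := refl_closed a a Pa Pa; rewrite dot_coroot mulfK ?dotxx_eq0 ?root_neq0 //.
by rewrite scaler_nat mulr2n opprD addrA subrr sub0r.
Qed.

Lemma roots_span x : (forall a, a \in Phi -> dot x a = 0) -> x = 0.
Proof. by case: HPhi => _ _ _ _; apply. Qed.

End RootSystem.

Section SimpleReflections.
Variables (R : realType) (n : nat) (Phi : seq 'rV[R]_n).
Variables (Delta : 'I_n -> 'rV[R]_n) (theta : 'rV[R]_n).
Hypothesis HPhi : root_system Phi.
Hypothesis Delta_root : forall i, Delta i \in Phi.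
Hypothesis theta_root : theta \in Phi.

Definition sroot (i : 'I_n.+1) :=
  if unlift ord0 i is Some k then Delta k else theta.
Definition slevel (i : 'I_n.+1) : R := if unlift ord0 i is Some k then 0 else 1.

Lemma srefE i : sref Delta theta i = refl (sroot i) (slevel i).
Proof. by rewrite /sref /sroot /slevel; case: unlift. Qed.

Lemma sroot_root i : sroot i \in Phi.
Proof. by rewrite /sroot; case: unlift. Qed.

Let sroot_neq0 i : sroot i != 0 := root_neq0 HPhi (sroot_root i).

Lemma sref_affine i : affine (sref Delta theta i).
Proof. by rewrite srefE; apply: refl_affine. Qed.

Lemma sref_lin_isometric i : lin_isometric (sref Delta theta i).
Proof. by rewrite srefE; apply: refl_lin_isometric. Qed.

Lemma sref_root_preserving i : root_preserving Phi (sref Delta theta i).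
Proof.
move=> b Pb; rewrite srefE lin_part_refl.
by case: HPhi => _ refl_closed _ _ _; apply: refl_closed => //; apply: sroot_root.
Qed.

Lemma srefK i : involutive (sref Delta theta i).
Proof. by rewrite srefE; apply: reflK. Qed.

Lemma sref_ray i z s v : sref Delta theta i (z + s *: v) =
  sref Delta theta i z + s *: lin_part (sref Delta theta i) v.
Proof. by rewrite srefE refl_ray. Qed.

Local Notation ua := (uact Delta theta).

Lemma uact_affine w j : affine (ua w j).
Proof. by elim: j => [|j IHj]; [apply: affine_id | apply: affine_comp IHj (sref_affine _)]. Qed.

Lemma uact_lin_isometric w j : lin_isometric (ua w j).
Proof.
elim: j => [|j IHj]; first exact: lin_isometric_id.
exact: lin_isometric_comp (uact_affine _ _) IHj (sref_lin_isometric _).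
Qed.

Lemma uact_root_preserving w j : root_preserving Phi (ua w j).
Proof.
elim: j => [|j IHj]; first exact: root_preserving_id.
exact: root_preserving_comp (uact_affine _ _) IHj (sref_root_preserving _).
Qed.

End SimpleReflections.

Section Uact.
Variables (R : realType) (n : nat) (Delta : 'I_n -> 'rV[R]_n) (theta : 'rV[R]_n).
Local Notation ua := (uact Delta theta).

Lemma eq_uact w w' j : w =1 w' -> ua w j =1 ua w' j.
Proof. by move=> ww' x; elim: j x => [|j IHj] x //=; rewrite ww' IHj. Qed.

Lemma uactD w i j x : ua w (i + j) x = ua w i (ua (fun k => w (i + k)%N) j x).
Proof. by elim: j x => [|j IHj] x; rewrite ?addn0 // addnS /= IHj. Qed.

End Uact.

Section FiniteOrder.
Variables (R : realType) (n : nat) (Phi : seq 'rV[R]_n) (f : 'rV[R]_n -> 'rV[R]_n).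
Hypothesis Phi_span : forall x, (forall a, a \in Phi -> dot x a = 0) -> x = 0.
Hypotheses (f_affine : affine f) (f_isometric : lin_isometric f).
Hypothesis f_roots : root_preserving Phi f.

Local Notation L := (lin_part f).

Lemma lin_part_inj : injective L.
Proof.
move=> x y Lxy; apply/eqP; rewrite -subr_eq0 -dotxx_eq0 -f_isometric.
by rewrite lin_partB // Lxy subrr dot0l.
Qed.

Lemma iter_lin_part_dot k u v : dot (iter k L u) (iter k L v) = dot u v.
Proof. by elim: k => [|k IHk] //=; rewrite f_isometric. Qed.

Lemma lin_part_iter k x : lin_part (iter k f) x = iter k L x.
Proof.
elim: k x => [|k IHk] x; first by rewrite /lin_part subr0.
by rewrite iterS -IHk -(lin_part_comp _ _ f_affine).
Qed.

Lemma iter_lin_part_id : exists2 d, (0 < d)%N & forall x, iter d L x = x.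
Proof.
pose g (a : seq_sub Phi) : seq_sub Phi := SeqSub (f_roots (ssvalP a)).
have g_inj : injective g by move=> a b /(congr1 val) /lin_part_inj /val_inj.
pose p := perm g_inj; exists #[p]%g; first exact: order_gt0.
have iter_root a : a \in Phi -> iter #[p]%g L a = a.
  move=> Pa; pose a' : seq_sub Phi := SeqSub Pa.
  have iter_p k : val (iter k p a') = iter k L a.
    by elim: k => [|k IHk] //=; rewrite permE /= IHk.
  by rewrite -iter_p -permX expg_order perm1.
move=> x; apply/eqP; rewrite -subr_eq0; apply/eqP/Phi_span => a Pa.
by rewrite dotBl -{1}(iter_root a Pa) iter_lin_part_dot subrr.
Qed.

Lemma iter_translation : exists2 d, (0 < d)%N & forall x, iter d f x = x + iter d f 0.
Proof.
have [d d_gt0 Ld] := iter_lin_part_id; exists d => // x.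
by apply/eqP; rewrite -subr_eq -[_ - _]/(lin_part _ x) lin_part_iter Ld.
Qed.

End FiniteOrder.

Section PeriodicWord.
Variables (T : Type) (w : nat -> T) (N : nat).
Hypothesis N_gt0 : (0 < N)%N.
Hypothesis w_periodic : forall j, w (j + N)%N = w j.

Lemma periodic_mulD k i : w (k * N + i)%N = w i.
Proof.
elim: k => [|k IHk]; first by rewrite mul0n add0n.
by rewrite mulSn -addnA addnC w_periodic IHk.
Qed.

Lemma periodic_mod j : w j = w (j %% N).
Proof. by rewrite {1}(divn_eq j N) periodic_mulD. Qed.

Lemma periodic_rev d j : (j < d * N)%N -> w (N.-1 - j %% N)%N = w (d * N - j.+1)%N.
Proof.
move=> j_lt; rewrite [RHS]periodic_mod; congr w.
have [q [r [r_lt j_eq]]] : exists q r, (r < N)%N /\ j = (q * N + r)%N.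
  by exists (j %/ N)%N, (j %% N)%N; rewrite ltn_mod -divn_eq.
rewrite {}j_eq in j_lt *.
have q_lt : (q < d)%N.
  by rewrite -(ltn_pmul2r N_gt0); exact: leq_ltn_trans (leq_addr r _) j_lt.
have -> : (d * N - (q * N + r).+1 = (d - q.+1) * N + (N - r.+1))%N.
  have : (q.+1 * N <= d * N)%N by rewrite leq_mul2r q_lt orbT.
  rewrite mulnBl !mulSn; lia.
by rewrite !modnMDl !modn_small; lia.
Qed.

End PeriodicWord.

Section FundamentalAlcove.
Variables (R : realType) (n : nat) (Phi : seq 'rV[R]_n) (Delta : 'I_n -> 'rV[R]_n).
Local Notation A := (fund_alcove Phi Delta).
Implicit Types z v x a : 'rV[R]_n.

Lemma fund_alcove_convex z v (s1 s s2 : R) : s1 <= s -> s <= s2 ->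
  A (z + s1 *: v) -> A (z + s2 *: v) -> A (z + s *: v).
Proof.
move=> s1s ss2 A1 A2 a Pa; have := A1 a Pa; have := A2 a Pa; rewrite !dotDl !dotZl.
by case: (lerP 0 (dot v a)) => va /andP[? ?] /andP[? ?]; apply/andP; split; nra.
Qed.

Lemma unit_interval_perturb z v (l : seq 'rV[R]_n) :
  exists2 e : R, 0 < e & forall e', 0 < e' -> e' <= e ->
    forall a, a \in l -> 0 < dot z a < 1 -> 0 < dot z a - e' * dot v a < 1.
Proof.
elim: l => [|a l [e e_gt0 IHl]]; first by exists 1.
have [/andP[za_gt0 za_lt1]|za_out] := boolP (0 < dot z a < 1); last first.
  by exists e => // e' ? ? b; rewrite inE => /orP[/eqP->|]; [rewrite (negbTE za_out) | apply: IHl].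
pose m := Num.min (dot z a) (1 - dot z a); pose M := `|dot v a| + 1.
have m_gt0 : 0 < m by rewrite lt_min za_gt0 subr_gt0.
have M_gt0 : 0 < M by rewrite ltr_pwDr.
exists (Num.min e (m / M)); first by rewrite lt_min e_gt0 divr_gt0.
move=> e' e'_gt0; rewrite le_min => /andP[e'_le_e e'_le] b.
rewrite inE => /orP[/eqP->|Pb]; last exact: IHl.
have e'M : e' * M <= m by rewrite -ler_pdivlMr.
have : m <= dot z a /\ m <= 1 - dot z a by split; rewrite ge_min lexx ?orbT.
have := ler_norm (dot v a); have : - dot v a <= `|dot v a| by rewrite -normrN ler_norm.
by rewrite /M in e'M => ? ? [? ?] _; apply/andP; split; nra.
Qed.

Lemma fund_alcove_open z v : A z -> exists2 e : R, 0 < e & A (z - e *: v).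
Proof.
move=> Az; have [e e_gt0 perturb] := unit_interval_perturb z v Phi.
exists e => // a Pa; rewrite -scaleNr dotDl dotZl mulNr.
by apply: perturb => //; [case: Pa | apply: Az].
Qed.

Hypothesis HPhi : root_system Phi.
Hypothesis Hsimple : simple_system Phi Delta.
Variable theta : 'rV[R]_n.
Hypothesis Hhighest : highest_root Phi Delta theta.

Lemma fund_alcove_dot_bound x a : A x -> a \in Phi -> -1 < dot x a < 1.
Proof.
move=> Ax Pa; case: Hsimple => _ /(_ a Pa) [a_pos|a_neg].
  by have /andP[? ?] := Ax a (conj Pa a_pos); apply/andP; split => //; lra.
have /andP[] := Ax (- a) (conj (root_opp HPhi Pa) a_neg).
by rewrite dotNr => ? ?; apply/andP; split; lra.
Qed.

Lemma pos_root_simple k : pos_root Phi Delta (Delta k).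
Proof.
split; first by case: Hsimple.
exists (fun i => (i == k) : nat); rewrite (bigD1 k) //= eqxx scale1r big1 ?addr0 //.
by move=> i /negbTE ->; rewrite scale0r.
Qed.

Lemma pos_root_highest : pos_root Phi Delta theta.
Proof.
case: Hhighest => theta_root /(_ _ (pos_root_simple _).1) theta_max; split => //.
pose k0 := Ordinal (rV_neq0_dim_gt0 (root_neq0 HPhi theta_root)).
have [c c_eq] := theta_max k0; have [c' c'_eq] := (pos_root_simple k0).2.
rewrite -(subrK (Delta k0) theta) c_eq c'_eq.
exists (fun i => c i + c' i)%N; rewrite -big_split.
by apply: eq_bigr => i _; rewrite natrD scalerDl.
Qed.

Lemma fund_alcove_sref_disj i x : A x -> ~ A (sref Delta theta i x).
Proof.
rewrite srefE /sroot /slevel; case: unlift => [k|] Ax Asx.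
- have /andP[? _] := Ax _ (pos_root_simple k).
  have /andP[] := Asx _ (pos_root_simple k).
  by rewrite refl_dot ?(root_neq0 HPhi (pos_root_simple k).1) //; lra.
- have /andP[_ ?] := Ax _ pos_root_highest.
  have /andP[] := Asx _ pos_root_highest.
  by rewrite refl_dot ?(root_neq0 HPhi pos_root_highest.1) //; lra.
Qed.

End FundamentalAlcove.

Section UpsilonOpp.
Variables (R : realType) (n : nat) (Phi : seq 'rV[R]_n).
Hypothesis HPhi : root_system Phi.

Lemma coroot_lattice_dot_int eta a : coroot_lattice Phi eta -> a \in Phi ->
  exists m : int, dot eta a = m%:~R.
Proof.
move=> [c ->] Pa; elim/big_ind: _ => [|x y [m1 E1] [m2 E2]|j _].
- by exists 0; rewrite dot0l.
- by exists (m1 + m2); rewrite dotDl E1 E2 rmorphD.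
- case: HPhi => _ _ coroot_int _ _.
  have [k Hk] := coroot_int _ a (mem_nth 0 (ltn_ord j)) Pa.
  by exists (c j * k); rewrite dotZl dotC Hk rmorphM.
Qed.

Lemma hyperplane_translate (H : set 'rV[R]_n) v :
  (forall a, a \in Phi -> exists m : int, dot v a = m%:~R) ->
  hyperplane Phi H -> hyperplane Phi [set y | H (y - v)].
Proof.
move=> v_int [a [m [Pa ->]]]; have [e ve] := v_int a Pa.
exists a, (m + e); split => //.
apply/boolp.funext => y /=; apply/boolp.propext.
by rewrite dotBl ve rmorphD; split => ?; lra.
Qed.

Lemma Upsilon_opp z0 eta : Upsilon Phi z0 eta -> Upsilon Phi z0 (- eta).
Proof.
case=> eta_lattice eta_neq0 eta_generic; split.
- case: eta_lattice => c ->; exists (fun j => - c j).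
  by rewrite -sumrN; apply: eq_bigr => j _; rewrite rmorphN scaleNr.
- by rewrite oppr_eq0.
move=> t t_ge0 [H1 [H2 [H1_hyp H2_hyp H12 H1t H2t]]].
pose k := Num.Def.archi_bound t; have t_lt_k : t < k%:R := archi_boundP t_ge0.
have k_eta_int a : a \in Phi -> exists m : int, dot (k%:R *: eta) a = m%:~R.
  move=> Pa; have [m eta_a] := coroot_lattice_dot_int eta_lattice Pa.
  by exists (k%:Z * m); rewrite dotZl eta_a intrM.
have ray_shift : z0 + (k%:R - t) *: eta - k%:R *: eta = z0 + t *: - eta.
  by apply/rowP => j; rewrite !mxE; ring.
apply: (eta_generic (k%:R - t)); first lra.
exists [set y | H1 (y - k%:R *: eta)], [set y | H2 (y - k%:R *: eta)].
split; rewrite /= ?ray_shift //; try exact: hyperplane_translate.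
move=> H12'; apply: H12; apply/boolp.funext => x.
by have /= := congr1 (fun S : set 'rV[R]_n => S (x + k%:R *: eta)) H12'; rewrite addrK.
Qed.

End UpsilonOpp.

Lemma bounded_multiples_eq0 (R : realType) (C E D : R) :
  (forall k : nat, `|C - k%:R * D| <= E) -> D = 0.
Proof.
move=> bounded; apply/eqP/negPn/negP => D_neq0.
have E_ge0 : 0 <= E by apply: le_trans (bounded 0%N).
have D_gt0 : 0 < `|D| by rewrite normr_gt0.
pose k := Num.Def.archi_bound ((E + `|C|) / `|D|).
have : E + `|C| < k%:R * `|D|.
  by rewrite -ltr_pdivrMr // archi_boundP // divr_ge0 // addr_ge0.
have := bounded k; rewrite ler_norml => /andP[? ?].
have := ler_norm C; have : - C <= `|C| by rewrite -normrN ler_norm.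
by case: (ltrP 0 D) => [/gtr0_norm|/ler0_norm] ->; nra.
Qed.

Section Parallel.
Variables (R : realType) (n : nat) (Phi : seq 'rV[R]_n).
Hypothesis Phi_span : forall x, (forall a, a \in Phi -> dot x a = 0) -> x = 0.

Lemma bounded_translates_parallel z e b :
  (forall k : nat, exists s : R, forall a, a \in Phi ->
     -1 < dot (z + s *: e - k%:R *: b) a < 1) ->
  e != 0 -> exists c : R, b = c *: e.
Proof.
move=> bounded e_neq0.
have minor0 a a' : a \in Phi -> a' \in Phi -> dot b a * dot e a' - dot e a * dot b a' = 0.
  move=> Pa Pa'.
  apply: (@bounded_multiples_eq0 _ (dot z a * dot e a' - dot e a * dot z a')
                                   (`|dot e a'| + `|dot e a|)) => k.
  have [s /[dup] /(_ a Pa) + /(_ a' Pa')] := bounded k; rewrite !dotBl !dotDl !dotZl.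
  set X := dot z a + _ - _; set Y := dot z a' + _ - _ => X_bd Y_bd.
  have -> : dot z a * dot e a' - dot e a * dot z a' -
      k%:R * (dot b a * dot e a' - dot e a * dot b a') = dot e a' * X - dot e a * Y.
    by rewrite /X /Y; ring.
  have nX : `|X| <= 1 by rewrite ler_norml; case/andP: X_bd => ? ?; apply/andP; split; lra.
  have nY : `|Y| <= 1 by rewrite ler_norml; case/andP: Y_bd => ? ?; apply/andP; split; lra.
  apply: le_trans (ler_normB _ _) _; rewrite !normrM.
  by apply: lerD; rewrite -[X in _ <= X]mulr1; apply: ler_wpM2l.
have [a0 Pa0 ea0] : exists2 a0, a0 \in Phi & dot e a0 != 0.
  have [/hasP[a0 Pa0 ea0]|/hasPn e_orth] := boolP (has (fun a => dot e a != 0) Phi).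
    by exists a0.
  by case/eqP: e_neq0; apply: Phi_span => a /e_orth; rewrite negbK => /eqP.
exists (dot b a0 / dot e a0).
apply/eqP; rewrite -subr_eq0; apply/eqP/Phi_span => a Pa.
rewrite dotBl dotZl.
have -> : dot b a - dot b a0 / dot e a0 * dot e a =
   (dot b a * dot e a0 - dot e a * dot b a0) / dot e a0 by field.
by rewrite minor0 ?mul0r.
Qed.

End Parallel.

Section ReversedRay.
Variables (R : realType) (n : nat) (Phi : seq 'rV[R]_n).
Variables (Delta : 'I_n -> 'rV[R]_n) (theta : 'rV[R]_n).
Hypothesis HPhi : root_system Phi.
Hypothesis Hsimple : simple_system Phi Delta.
Hypothesis Hhighest : highest_root Phi Delta theta.
Variables (w : nat -> 'I_n.+1) (N d : nat).
Hypotheses (N_gt0 : (0 < N)%N) (d_gt0 : (0 < d)%N).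
Hypothesis w_periodic : forall j, w (j + N)%N = w j.
Hypothesis uact_N_translation :
  forall x, iter d (uact Delta theta w N) x = x + iter d (uact Delta theta w N) 0.

Local Notation ua := (uact Delta theta).
Local Notation sr := (sref Delta theta).
Local Notation A := (fund_alcove Phi Delta).
Local Notation K := (d * N)%N.
Local Notation b := (ua w K 0).
Local Notation w' := (fun j => w (N.-1 - j %% N)%N).

Let Delta_root i : Delta i \in Phi. Proof. by case: Hsimple. Qed.
Let theta_root : theta \in Phi. Proof. by case: Hhighest. Qed.

Lemma K_gt0 : (0 < K)%N. Proof. by rewrite muln_gt0 d_gt0 N_gt0. Qed.

Lemma uact_mulN_add k j x : ua w (k * N + j) x = ua w (k * N) (ua w j x).
Proof. by rewrite uactD (eq_uact _ _ _ (periodic_mulD w_periodic k)). Qed.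

Lemma uact_mulN k x : ua w (k * N) x = iter k (ua w N) x.
Proof. by elim: k x => [|k IHk] x //; rewrite mulSn addnC uact_mulN_add IHk -iterSr. Qed.

Lemma uact_K x : ua w K x = x + b.
Proof. by rewrite !uact_mulN uact_N_translation. Qed.

Lemma uact_addK j x : ua w (K + j) x = ua w j x + b.
Proof. by rewrite uact_mulN_add uact_K. Qed.

Lemma uact_mulKD q j x : ua w (q * K + j) x = ua w j x + q%:R *: b.
Proof.
elim: q => [|q IHq]; first by rewrite mul0n add0n scale0r addr0.
by rewrite mulSn -addnA uact_addK IHq -addrA -[q.+1]addn1 natrD scalerDl scale1r.
Qed.

Lemma uact_rev j : (j <= K)%N -> forall x, ua w (K - j) x = ua w' j x + b.
Proof.
elim: j => [|j IHj] j_lt x; first by rewrite subn0 uact_K.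
set i := w (K - j.+1)%N.
have w'j : w (N.-1 - j %% N)%N = i by apply: periodic_rev.
rewrite -[x in LHS](srefK HPhi Delta_root theta_root i).
have -> : ua w (K - j.+1) (sr i (sr i x)) = ua w (K - j) (sr i x).
  by rewrite -(subnSK j_lt).
by rewrite IHj 1?ltnW // -w'j.
Qed.

Lemma uact_rev_K x : ua w' K x = x - b.
Proof.
rewrite -[x in RHS]/(ua w 0 x).
by have := uact_rev (leqnn K) x; rewrite subnn => ->; rewrite addrK.
Qed.

Lemma uact_rev_mulKD q r x : ua w' (q * K + r) x = ua w' r x - q%:R *: b.
Proof.
elim: q => [|q IHq]; first by rewrite mul0n add0n scale0r subr0.
have w'_periodic : (fun j => w' (K + j)) =1 w' by move=> j /=; rewrite modnMDl.
rewrite mulSn -addnA uactD (eq_uact _ _ _ w'_periodic) uact_rev_K IHq.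
by rewrite -[q.+1]addn1 natrD scalerDl scale1r opprD addrA.
Qed.

Lemma uact_rev_mulKD_sub q r x : (r <= K)%N ->
  ua w' (q * K + r) x = ua w (K - r) x - q.+1%:R *: b.
Proof.
move=> r_le; rewrite uact_rev_mulKD (uact_rev r_le).
by apply/rowP => i; rewrite !mxE -[q.+1]addn1 natrD; ring.
Qed.

Variables (z0 eta : 'rV[R]_n) (t : nat -> R).
Hypotheses (z0_alcove : A z0) (eta_neq0 : eta != 0).
Hypotheses (t0 : t 0%N = 0) (t_lt : forall j, t j < t j.+1).
Hypothesis t_alcove : forall j s, t j < s -> s < t j.+1 ->
  alcove Phi Delta (ua w j) (z0 + s *: eta).

Local Notation ray s := (z0 + s *: eta).

Lemma t_le i j : (i <= j)%N -> t i <= t j.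
Proof.
move=> /subnK <-; elim: (j - i)%N => [|m IHm]; first by rewrite add0n.
by apply: le_trans IHm _; rewrite addSn ltW.
Qed.

Lemma t1_gt0 : 0 < t 1.
Proof. by rewrite -t0. Qed.

Lemma alcove_translate f g v p : (forall x, f x = g x + v) ->
  alcove Phi Delta f p <-> alcove Phi Delta g (p - v).
Proof.
move=> fE; split=> [[x Ax <-]|[x Ax gx]]; exists x => //.
- by rewrite fE addrK.
- by rewrite fE gx subrK.
Qed.

Lemma alcove_id p : alcove Phi Delta id p <-> A p.
Proof. by split=> [[x Ax <-] //|Ap]; exists p. Qed.

Lemma alcove_sref i p : alcove Phi Delta (sr i) p -> A (sr i p).
Proof. by case=> x Ax <-; rewrite (srefK HPhi Delta_root theta_root). Qed.

Lemma ray_first_alcove s : 0 <= s -> s < t 1 -> A (ray s).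
Proof.
rewrite le_eqVlt => /orP[/eqP<-|s_gt0] s_lt; first by rewrite scale0r addr0.
by apply/alcove_id; apply: (t_alcove (j := 0)); rewrite ?t0.
Qed.

Lemma ray_second_alcove s : t 1 < s -> s < t 2 -> A (sr (w 0) (ray s)).
Proof. by move=> ? ?; apply/alcove_sref/(t_alcove (j := 1)). Qed.

Lemma fund_alcove_sref_ray_convex i s1 s s2 : s1 <= s -> s <= s2 ->
  A (sr i (ray s1)) -> A (sr i (ray s2)) -> A (sr i (ray s)).
Proof. by rewrite !sref_ray; apply: fund_alcove_convex. Qed.

Lemma ray_sref_first_ge s : A (sr (w 0) (ray s)) -> t 1 <= s.
Proof.
move=> A_sr; rewrite leNgt; apply/negP => s_lt.
have disj := fund_alcove_sref_disj HPhi Hsimple Hhighest (i := w 0).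
have [s_ge0|s_lt0] := lerP 0 s; first exact: disj (ray_first_alcove s_ge0 s_lt) A_sr.
have t12 := t_lt 1; have t1 := t1_gt0.
have A_sr0 : A (sr (w 0) (ray 0)).
  apply: (fund_alcove_sref_ray_convex (s1 := s) (s2 := (t 1 + t 2) / 2)) => //; try lra.
  by apply: ray_second_alcove; lra.
exact: disj (ray_first_alcove (lexx 0) t1) A_sr0.
Qed.

Lemma translation_parallel : exists c : R, b = c *: eta.
Proof.
apply: (bounded_translates_parallel (roots_span HPhi) _ eta_neq0) => k.
have t_mid := t_lt (k * K)%N.
exists ((t (k * K)%N + t (k * K).+1) / 2) => a Pa.
apply: (fund_alcove_dot_bound HPhi Hsimple) => //; apply/alcove_id.
apply/(alcove_translate (f := ua w (k * K)) (g := ua w 0)); last by apply: t_alcove; lra.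
by move=> x; rewrite -[(k * K)%N]addn0 uact_mulKD.
Qed.

Section Crossings.
Variable c : R.
Hypothesis b_eq : b = c *: eta.

Lemma ray_subZ s v : ray s - v *: eta = ray (s - v).
Proof. by rewrite scalerBl addrA. Qed.

Lemma ray_opp_shift s m : z0 + s *: - eta - - (m%:R *: b) = ray (m%:R * c - s).
Proof. by rewrite b_eq; apply/rowP => i; rewrite !mxE; ring. Qed.

Lemma ray_alcove_K s : t K < s -> s < t K.+1 -> A (ray (s - c)).
Proof.
move=> ? ?; apply/alcove_id; rewrite -ray_subZ -b_eq.
by apply/(alcove_translate (f := ua w K)); [apply: uact_K | apply: t_alcove].
Qed.

Lemma ray_alcove_K1 s : t K.+1 < s -> s < t K.+2 -> A (sr (w 0) (ray (s - c))).
Proof.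
move=> ? ?; apply/alcove_sref; rewrite -ray_subZ -b_eq.
apply/(alcove_translate (f := ua w K.+1)); last exact: t_alcove.
by move=> x; rewrite -[K.+1]addn1 uact_addK.
Qed.

Lemma ray_alcove_K_pred s : t K.-1 < s -> s < t K ->
  A (sr (w' 0) (ray (s - c))).
Proof.
have K_pred : K.-1.+1 = K by rewrite prednK // K_gt0.
move=> s_gt; rewrite -{1}K_pred => s_lt.
apply/alcove_sref; rewrite -ray_subZ -b_eq.
apply/(alcove_translate (f := ua w K.-1)); last exact: t_alcove.
by move=> x; rewrite -subn1 (uact_rev K_gt0).
Qed.

Lemma t1_add_c_le : t 1 + c <= t K.+1.
Proof.
rewrite leNgt; apply/negP => lt_t1c; have := t_lt K.+1.
have [le_t2|lt_t2] := lerP (t 1 + c) (t K.+2) => t_K12.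
- have := ray_sref_first_ge (ray_alcove_K1 (s := (t K.+1 + t 1 + c) / 2) _ _); lra.
- have := ray_sref_first_ge (ray_alcove_K1 (s := (t K.+1 + t K.+2) / 2) _ _); lra.
Qed.

(* Otherwise the times just below t_K - c >= 0, where the shifted ray lies in a
   reflected copy of A, would sit between two times where it lies in A. *)
Lemma tK_lt_c : t K < c.
Proof.
rewrite ltNge; apply/negP => c_le.
have disj := fund_alcove_sref_disj HPhi Hsimple Hhighest (i := w' 0).
have [e e_gt0 A_back] := fund_alcove_open eta z0_alcove.
have A_e : A (ray (- e)) by rewrite scaleNr.
have tK := t_lt K; have tK1 := t_lt K.-1; rewrite prednK ?K_gt0 // in tK1.
pose y := (t K + t K.+1) / 2 - c.
have A_y : A (ray y) by apply: ray_alcove_K; lra.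
pose x := if t K.-1 - c <= - e then (- e + (t K - c)) / 2 else (t K.-1 - c + (t K - c)) / 2.
have [x_gt x_lt x_gte] : [/\ t K.-1 - c < x, x < t K - c & - e < x].
  by rewrite /x; case: ifP => ?; split; lra.
have A_srx : A (sr (w' 0) (ray x)).
  by have := ray_alcove_K_pred (s := x + c); rewrite addrK; apply; lra.
apply: disj A_srx; apply: (fund_alcove_convex (s1 := - e) (s2 := y)) => //; rewrite /y; lra.
Qed.

Lemma c_gt0 : 0 < c.
Proof. by have := t_le (leq0n K); rewrite t0 => ?; have := tK_lt_c; lra. Qed.

Definition rev_time (i : nat) : R := ((i %/ K)%N.+1)%:R * c - t (K - i %% K)%N.

Definition rev_crossing (j : nat) : R := if j is i.+1 then rev_time i else 0.

Lemma rev_crossingS i : rev_crossing i.+1 = rev_time i.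
Proof. by []. Qed.

Lemma rev_time_mulKD q r : (r < K)%N -> rev_time (q * K + r) = q.+1%:R * c - t (K - r)%N.
Proof.
by move=> r_lt; rewrite /rev_time divnMDl ?K_gt0 // divn_small // addn0 modnMDl modn_small.
Qed.

Lemma mulKD_decomp i : exists q r, (r < K)%N /\ i = (q * K + r)%N.
Proof. by exists (i %/ K)%N, (i %% K)%N; rewrite ltn_mod K_gt0 -divn_eq. Qed.

Lemma mulKD_succ q r : r.+1 = K -> (q * K + r).+1 = (q.+1 * K + 0)%N.
Proof. by move=> rK; rewrite addn0 mulSn -rK; lia. Qed.

Lemma rev_crossing_lt j : rev_crossing j < rev_crossing j.+1.
Proof.
have := tK_lt_c; have := t1_gt0; case: j => [|i] /= ? ?.
  by rewrite -[0%N](addn0 (0 * K)) rev_time_mulKD ?K_gt0 // subn0 mul1r; lra.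
have [q [r [r_lt ->]]] := mulKD_decomp i; rewrite rev_time_mulKD //.
move: (r_lt); rewrite leq_eqVlt => /orP[/eqP rK|r1_lt].
- have -> : (K - r = 1)%N by rewrite -rK subSnn.
  rewrite mulKD_succ // rev_time_mulKD ?K_gt0 // subn0.
  by rewrite -[q.+2]addn1 -[q.+1]addn1 !natrD; lra.
- rewrite -addnS rev_time_mulKD //.
  by have := t_lt (K - r.+1)%N; rewrite subnSK // => ?; lra.
Qed.

Lemma rev_crossing_unbounded (M : R) : exists j, M < rev_crossing j.
Proof.
have c_pos := c_gt0; have tK_ge0 : 0 <= t K by rewrite -t0 t_le.
pose q := Num.Def.archi_bound ((`|M| + t K) / c).
have : (`|M| + t K) / c < q%:R by rewrite archi_boundP // divr_ge0 // ?addr_ge0 // ltW.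
rewrite ltr_pdivrMr // => q_bound.
exists (q * K + 0)%N.+1; rewrite /= rev_time_mulKD ?K_gt0 // subn0 -[q.+1]addn1 natrD.
by have := ler_norm M; lra.
Qed.

Lemma rev_crossing_first_alcove s : 0 < s -> s < rev_crossing 1 ->
  A (z0 + s *: - eta).
Proof.
rewrite rev_crossingS /rev_time div0n mod0n subn0 mul1r => ? ?.
have := t1_add_c_le; have := t1_gt0; have := ray_alcove_K (s := c - s).
rewrite (_ : c - s - c = - s) ?scaleNr -?scalerN; last by ring.
by move=> A_ray ? ?; apply: A_ray; lra.
Qed.

Lemma rev_crossing_alcove j s : rev_crossing j < s -> s < rev_crossing j.+1 ->
  alcove Phi Delta (ua w' j) (z0 + s *: - eta).
Proof.
have := tK_lt_c; have := t1_gt0; have := t1_add_c_le.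
case: j => [|i] ? ? ?; first by move=> ? ?; apply/alcove_id/rev_crossing_first_alcove.
rewrite !rev_crossingS; have [q [r [r_lt ->]]] := mulKD_decomp i.
rewrite rev_time_mulKD //.
move: (r_lt); rewrite leq_eqVlt => /orP[/eqP rK|r1_lt].
- have -> : (K - r = 1)%N by rewrite -rK subSnn.
  rewrite mulKD_succ // rev_time_mulKD ?K_gt0 // subn0 => s_gt s_lt.
  apply/(alcove_translate (g := id) (v := - (q.+1%:R *: b))).
    by move=> x; rewrite uact_rev_mulKD.
  apply/alcove_id; rewrite ray_opp_shift.
  have := ray_alcove_K (s := q.+2%:R * c - s).
  rewrite (_ : q.+2%:R * c - s - c = q.+1%:R * c - s); last by rewrite -[q.+2]addn1 natrD; ring.
  by apply; rewrite -[q.+2]addn1 -[q.+1]addn1 !natrD in s_gt s_lt *; lra.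
- rewrite -addnS rev_time_mulKD // => ? ?.
  apply/(alcove_translate (g := ua w (K - r.+1)) (v := - (q.+1%:R *: b))).
    by move=> x; rewrite uact_rev_mulKD_sub.
  by rewrite ray_opp_shift; apply: t_alcove; rewrite ?subnSK //; lra.
Qed.

End Crossings.

Lemma ray_word_rev : ray_word Phi Delta theta z0 (- eta) w'.
Proof.
have [c b_eq] := translation_parallel.
exists (rev_crossing c); split.
- by [].
- exact: rev_crossing_lt.
- exact: rev_crossing_unbounded.
- exact: rev_crossing_alcove.
Qed.

End ReversedRay.

Unset Implicit Arguments.
Theorem lemma3p2 (R : realType) (n : nat) (Phi : seq 'rV[R]_n)
  (Delta : 'I_n -> 'rV[R]_n) (theta z0 eta : 'rV[R]_n)
  (w : nat -> 'I_n.+1) (N : nat) :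
  root_system Phi -> irreducible_rs Phi -> simple_system Phi Delta ->
  highest_root Phi Delta theta ->
  fund_alcove Phi Delta z0 ->
  Upsilon Phi z0 eta ->
  ray_word Phi Delta theta z0 eta w ->
  (0 < N)%N -> (forall j, w (j + N)%N = w j) ->
  Upsilon Phi z0 (- eta) /\
  ray_word Phi Delta theta z0 (- eta) (fun j => w (N.-1 - j %% N)%N).
Proof.
move=> HPhi _ Hsimple Hhighest z0_alcove eta_Upsilon [t [t0 t_lt _ t_alcove]] N_gt0 w_periodic.
split; first exact: Upsilon_opp.
have Delta_root i : Delta i \in Phi by case: Hsimple.
have theta_root : theta \in Phi by case: Hhighest.
have [d d_gt0 uact_N_translation] := iter_translation (roots_span HPhi)
  (uact_affine Delta theta w N) (uact_lin_isometric HPhi Delta_root theta_root w N)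
  (uact_root_preserving HPhi Delta_root theta_root w N).
have eta_neq0 : eta != 0 by case: eta_Upsilon.
exact (ray_word_rev HPhi Hsimple Hhighest N_gt0 d_gt0 w_periodic uact_N_translation
  z0_alcove eta_neq0 t0 t_lt t_alcove).
Qed.
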